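(* Let $L$ be a distributive lattice (not necessarily bounded), let $n\ge 1$, and for each $i\in[n]=\{1,\dots,n\}$ let $a_i,b_i\in L$ with $a_i<b_i$. For $I\subseteq[n]$ let $\widehat{\mathbf e}_I\in L^n$ be the tuple whose $i$-th component is $b_i$ if $i\in I$ and $a_i$ if $i\notin I$, and let $D=\{\widehat{\mathbf e}_I : I\subseteq[n]\}$. Let $f\colon D\to L$. Then there exists a lattice polynomial function $p\colon L^n\to L$ with $p|_D=f$ if and only if $f$ is monotone and satisfies $$f(\widehat{\mathbf e}_{I\cup\{k\}})\wedge a_k\le f(\widehat{\mathbf e}_I)\le f(\widehat{\mathbf e}_{I\setminus\{k\}})\vee b_k\quad\text{for all } I\subseteq[n],\ k\in[n].\qquad(\star)$$ In this case, a polynomial function $p$ over $L$ satisfies $p|_D=f$ if and only if $c_I^-\le c_I\le c_I^+$ for all $I\subseteq[n]$, where $c_I$ are the coefficients of the (monotone) DNF of $p$ and $c_I^-,c_I^+$ are as defined in the context. In particular, one such $p$ is the polynomial function $p_0$ given by $$p_0(\mathbf x)=\bigvee_{I\subseteq[n]}\Bigl(f(\widehat{\mathbf e}_I)\wedge\bigwedge_{i\in I}x_i\Bigr).$$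
   Context: A lattice polynomial function on $L$ is a function $L^n\to L$ obtainable as a composition of $\wedge$, $\vee$, projections and constants from $L$. Let $0$ and $1$ denote the least and greatest elements of $L$ if they exist, and otherwise external elements adjoined below and above $L$. Every polynomial function $p$ over $L$ has a unique representation in disjunctive normal form (DNF) $p(\mathbf x)=\bigvee_{I\subseteq[n]}(c_I\wedge\bigwedge_{i\in I}x_i)$ with coefficients $c_I\in L\cup\{0,1\}$ that are monotone ($I\subseteq J\Rightarrow c_I\le c_J$), $c_\emptyset\neq 1$, $c_{[n]}\neq 0$; these are ''the coefficients of the DNF of $p$''. Embed $L$ into the Boolean algebra $B$ generated by $L$ (Birkhoff–Priestley), with bounds $0,1$ (coinciding with those of $L$ if $L$ is bounded) and complement $x\mapsto x'$. For $I\subseteq[n]$ define in $B$: $c_I^-=f(\widehat{\mathbf e}_I)\wedge\bigwedge_{i\notin I}a_i'$ and $c_I^+=f(\widehat{\mathbf e}_I)\vee\bigvee_{i\in I}b_i'$. $f$ monotone means $I\subseteq J\Rightarrow f(\widehat{\mathbf e}_I)\le f(\widehat{\mathbf e}_J)$. *)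

From mathcomp Require Import all_boot all_order.
Set Implicit Arguments. Unset Strict Implicit. Unset Printing Implicit Defensive.
Import Order.TTheory.
Local Open Scope order_scope.

Section Defs.
Context {d : Order.disp_t} {L : distrLatticeType d} {n : nat}.

Inductive lterm : Type :=
  | LVar of 'I_n
  | LConst of L
  | LMeet of lterm & lterm
  | LJoin of lterm & lterm.

Fixpoint leval (t : lterm) (x : 'I_n -> L) : L :=
  match t with
  | LVar i => x i
  | LConst c => c
  | LMeet t1 t2 => leval t1 x `&` leval t2 x
  | LJoin t1 t2 => leval t1 x `|` leval t2 x
  end.

Definition polyfun (p : ('I_n -> L) -> L) : Prop :=
  exists t : lterm, forall x, p x = leval t x.

Definition ehat (a b : 'I_n -> L) (I : {set 'I_n}) : 'I_n -> L :=
  fun i => if i \in I then b i else a i.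

Definition restricts (p : ('I_n -> L) -> L) (a b : 'I_n -> L)
  (f : {set 'I_n} -> L) : Prop :=
  forall I : {set 'I_n}, p (ehat a b I) = f I.

Definition fmonotone (f : {set 'I_n} -> L) : Prop :=
  forall I J : {set 'I_n}, I \subset J -> f I <= f J.

Definition star_cond (a b : 'I_n -> L) (f : {set 'I_n} -> L) : Prop :=
  forall (I : {set 'I_n}) (k : 'I_n),
    (f (k |: I) `&` a k <= f I) && (f I <= f (I :\ k) `|` b k).

(* p_0(x) = \bigvee_I (f I /\ \bigwedge_{i in I} x_i); the empty meet is
   omitted (it is the external top) and the I = set0 term is f set0. *)
Definition p0 (f : {set 'I_n} -> L) (x : 'I_n -> L) : L :=
  foldr (fun I acc => acc `|` foldr (fun i m => m `&` x i) (f I) (enum I))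
        (f set0) (enum [set: {set 'I_n}]).

Section Bool.
Context {dB : Order.disp_t} {B : ctbDistrLatticeType dB}.

Definition bool_embedding (phi : L -> B) : Prop :=
  [/\ injective phi,
      forall x y, phi (x `&` y) = phi x `&` phi y,
      forall x y, phi (x `|` y) = phi x `|` phi y,
      forall l0, (forall y, l0 <= y) -> phi l0 = \bot
    & forall l1, (forall y, y <= l1) -> phi l1 = \top].

(* c (with values in B) is the family of coefficients of the DNF of p,
   with L u {0,1} identified with phi(L) u {\bot, \top} *)
Definition dnf_coeffs (phi : L -> B) (p : ('I_n -> L) -> L)
  (c : {set 'I_n} -> B) : Prop :=
  [/\ forall I, (exists l, c I = phi l) \/ c I = \bot \/ c I = \top,
      forall I J : {set 'I_n}, I \subset J -> c I <= c J,
      c set0 != \top,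
      c [set: 'I_n] != \bot
    & forall x : 'I_n -> L,
        phi (p x) = \join_(I : {set 'I_n}) (c I `&` \meet_(i in I) phi (x i))].

Definition cminus (phi : L -> B) (a : 'I_n -> L) (f : {set 'I_n} -> L)
  (I : {set 'I_n}) : B :=
  phi (f I) `&` \meet_(i | i \notin I) ~` phi (a i).

Definition cplus (phi : L -> B) (b : 'I_n -> L) (f : {set 'I_n} -> L)
  (I : {set 'I_n}) : B :=
  phi (f I) `|` \join_(i in I) ~` phi (b i).

Definition coeff_bounds (phi : L -> B) (a b : 'I_n -> L) (f : {set 'I_n} -> L)
  (c : {set 'I_n} -> B) : Prop :=
  forall I : {set 'I_n}, (cminus phi a f I <= c I) && (c I <= cplus phi b f I).
End Bool.
End Defs.

Definition strict_lt {d : Order.disp_t} {L : distrLatticeType d} (x y : L) : bool :=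
  (x < y)%O.

From mathcomp Require Import all_boot all_order.
Set Implicit Arguments. Unset Strict Implicit. Unset Printing Implicit Defensive.
Import Order.Theory.
Local Open Scope order_scope.

(* Necessity: a lattice term t satisfies t(y) /\ c <= t(x) whenever
   y_i /\ c <= x_i for all i, and dually; applied to the tuples e_{I u {k}},
   e_I, e_{I \ {k}}, which differ only in coordinate k, this gives the star
   condition.
   Conversely, the star condition yields two estimates.  Removing the elements
   of I \ J one at a time gives f(e_I) /\ meet_{i in I \ J} a_i <= f(e_J).
   Splitting along f(e_J) <= f(e_{J \ k}) \/ b_k gives f(e_J) <= G(J) for
   every monotone G that dominates f(e_K) /\ meet_{i in K} b_i at every K.
   The first estimate bounds p_0, resp. a DNF with c_I <= c_I^+, from above
   on D; the second, with G(J) = p(e_J), bounds it from below, where for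
   c_I^- <= c_I one first splits along a_i \/ a_i' for every i outside K in
   the Boolean algebra. *)

Lemma le_by_split d (X : distrLatticeType d) (y u v z : X) :
  y <= u `|` v -> (forall w, w <= y -> w <= u -> w <= z) ->
  (forall w, w <= y -> w <= v -> w <= z) -> y <= z.
Proof.
move=> yuv hu hv; rewrite -(meet_idPl yuv) meetUr leUx.
by rewrite hu ?hv ?leIl ?leIr.
Qed.

Lemma leI_shunt d (B : ctbDistrLatticeType d) (x y z : B) :
  (x `&` y <= z) = (x <= z `|` ~` y).
Proof. by rewrite -[y in LHS]complK -diffE leBLR joinC. Qed.

Lemma card_setD1_lt (T : finType) (A : {set T}) k m :
  k \in A -> #|A| < m.+1 -> #|A :\ k| < m.
Proof. by move=> kA; apply: leq_trans (proper_card (properD1 kA)). Qed.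

Lemma le_by_compl_cases d (B : ctbDistrLatticeType d) (T : finType)
    (S : {set T}) (x : T -> B) (y z : B) :
  (forall (U : {set T}) w, U \subset S -> w <= y ->
     {in U, forall i, w <= x i} -> {in S :\: U, forall i, w <= ~` x i} -> w <= z) ->
  y <= z.
Proof.
have [m ltSm] := ubnP #|S|; elim: m S y ltSm => // m IH S y ltSm cases.
have [S0 | [k kS]] := set_0Vmem S.
  by apply: (cases set0) => // [|i|i]; rewrite ?S0 ?sub0set ?inE.
have ltS'm := card_setD1_lt kS ltSm.
apply: (@le_by_split _ _ y (x k) (~` x k)); first by rewrite joinxC lex1.
- move=> w wy wx; apply: (IH _ w ltS'm) => U v sU vw vU vSU.
  apply: (cases (k |: U)) => [||i|i].
  + by rewrite subUset sub1set kS (subset_trans sU) ?subD1set.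
  + exact: le_trans vw wy.
  + by rewrite !inE => /orP[/eqP -> | /vU //]; apply: le_trans vw wx.
  + by rewrite !inE negb_or => /andP[/andP[ik iU] iS]; apply: vSU; rewrite !inE ik iU.
- move=> w wy wx; apply: (IH _ w ltS'm) => U v sU vw vU vSU.
  apply: (cases U) => [||//|i].
  + exact: subset_trans sU (subD1set _ _).
  + exact: le_trans vw wy.
  + rewrite !inE => /andP[iU iS]; have [-> | ik] := eqVneq i k.
      exact: le_trans vw wx.
    by apply: vSU; rewrite !inE ik iU.
Qed.

Lemma ehat_mono d (X : distrLatticeType d) n (a b : 'I_n -> X) (I J : {set 'I_n}) :
  (forall i, a i <= b i) -> I \subset J -> forall i, ehat a b I i <= ehat a b J i.
Proof.
move=> le_ab sIJ i; rewrite /ehat; case: ifPn => [/(subsetP sIJ) -> // | _].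
by case: ifP.
Qed.

Section StarCondition.
Context {d : Order.disp_t} {X : distrLatticeType d} {n : nat}.
Variables (lo hi : 'I_n -> X) (F : {set 'I_n} -> X).
Hypothesis F_mono : fmonotone F.
Hypothesis F_star : star_cond lo hi F.

Lemma star_meet_le (I : {set 'I_n}) k : F (k |: I) `&` lo k <= F I.
Proof. by case/andP: (F_star I k). Qed.

Lemma star_le_join (I : {set 'I_n}) k : F I <= F (I :\ k) `|` hi k.
Proof. by case/andP: (F_star I k). Qed.

Lemma star_meet_lo (I J : {set 'I_n}) y :
  y <= F I -> {in I :\: J, forall i, y <= lo i} -> y <= F J.
Proof.
have [m ltm] := ubnP #|I :\: J|; elim: m I ltm => // m IH I ltm yI ylo.
have [IJ0 | [k kIJ]] := set_0Vmem (I :\: J).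
  by apply: le_trans yI (F_mono _); rewrite -setD_eq0 IJ0.
have [kI kJ] := setDP kIJ.
apply: (IH (I :\ k)).
- by rewrite setDDl setUC -setDDl; apply: card_setD1_lt.
- apply: le_trans (star_meet_le (I :\ k) k); rewrite setD1K // lexI yI.
  exact: ylo.
- by move=> i /setDP[/setD1P[_ iI] iJ]; apply: ylo; rewrite inE iJ.
Qed.

Lemma star_le_dominating (G : {set 'I_n} -> X) :
  fmonotone G ->
  (forall K y, y <= F K -> {in K, forall i, y <= hi i} -> y <= G K) ->
  forall J, F J <= G J.
Proof.
move=> G_mono G_base.
have gen m J T y : #|J :\: T| < m -> T \subset J -> y <= F J ->
    {in T, forall i, y <= hi i} -> y <= G J.
  elim: m J T y => // m IH J T y ltm sTJ yF yhi.
  have [JT0 | [k kJT]] := set_0Vmem (J :\: T).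
    apply: G_base yF _ => i iJ; apply: yhi.
    by apply: subsetP iJ; rewrite -setD_eq0 JT0.
  have [kJ kT] := setDP kJT.
  apply: (le_by_split (le_trans yF (star_le_join J k))) => w wy wk.
    apply: le_trans (G_mono _ _ (subD1set J k)); apply: (IH _ T) => //.
    - by rewrite setDDl setUC -setDDl; apply: card_setD1_lt.
    - apply/subsetP => i iT; rewrite !inE (subsetP sTJ _ iT) andbT.
      by apply/eqP => ik; move: kT; rewrite -ik iT.
    - by move=> i iT; apply: le_trans wy (yhi i iT).
  apply: (IH J (k |: T)) => //.
  - by rewrite setUC -setDDl; apply: card_setD1_lt.
  - by rewrite subUset sub1set kJ.
  - exact: le_trans wy yF.
  - by move=> i /setU1P[-> // | iT]; apply: le_trans wy (yhi i iT).
move=> J; have [m ltm] := ubnP #|J :\: set0|.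
by apply: (gen m J set0) => // [|i]; rewrite ?sub0set ?inE.
Qed.
End StarCondition.

Section PolynomialFunctions.
Context {d : Order.disp_t} {L : distrLatticeType d} {n : nat}.
Implicit Types (t : @lterm d L n) (x y : 'I_n -> L) (c : L).

Lemma leval_meet t x y c : (forall i, y i `&` c <= x i) ->
  leval t y `&` c <= leval t x.
Proof.
move=> le_yx; elim: t => /= [i | c' | t1 IH1 t2 IH2 | t1 IH1 t2 IH2].
- exact: le_yx.
- exact: leIl.
- by rewrite -(meetxx c) meetACA leI2.
- by rewrite meetUl leU2.
Qed.

Lemma leval_join t x y c : (forall i, x i <= y i `|` c) ->
  leval t x <= leval t y `|` c.
Proof.
move=> le_xy; elim: t => /= [i | c' | t1 IH1 t2 IH2 | t1 IH1 t2 IH2].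
- exact: le_xy.
- exact: leUl.
- by rewrite joinIl leI2.
- by rewrite -(joinxx c) joinACA leU2.
Qed.

Lemma leval_mono t x y : (forall i, x i <= y i) -> leval t x <= leval t y.
Proof.
move=> le_xy; rewrite -[leval t x]meetxx; apply: leval_meet => i.
exact: leIxl.
Qed.

Lemma polyfun_restricts_star (p : ('I_n -> L) -> L) a b f :
  (forall i, a i <= b i) -> polyfun p -> restricts p a b f ->
  fmonotone f /\ star_cond a b f.
Proof.
move=> le_ab [t pt] pf; split=> [I J sIJ | I k].
  by rewrite -!pf !pt; apply/leval_mono/ehat_mono.
rewrite -!pf !pt leval_meet ?leval_join // => i; rewrite /ehat !inE.
  case: eqVneq => [-> | _] /=; last exact: leUl.
  by case: (k \in I); apply: lexUr.
case: eqVneq => [-> | _] /=; last exact: leIl.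
by case: (k \in I); [apply: leIl | apply: leIr].
Qed.

Definition monom (z : L) (s : seq 'I_n) x : L := foldr (fun i m => m `&` x i) z s.

Lemma le_monom w z s x : (w <= monom z s x) = (w <= z) && all (fun i => w <= x i) s.
Proof. by elim: s => [|i s IH] /=; rewrite ?andbT // lexI IH andbAC andbA. Qed.

Lemma monom_le_coef z s x : monom z s x <= z.
Proof. by move: (lexx (monom z s x)); rewrite le_monom => /andP[]. Qed.

Lemma monom_le_var z s x i : i \in s -> monom z s x <= x i.
Proof.
by move=> si; move: (lexx (monom z s x)); rewrite le_monom => /andP[_ /allP]; apply.
Qed.

Definition monom_term (z : L) (s : seq 'I_n) : @lterm d L n :=
  foldr (fun i m => LMeet m (LVar i)) (LConst z) s.

Lemma leval_monom_term z s x : leval (monom_term z s) x = monom z s x.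
Proof. by elim: s => //= i s ->. Qed.

Variable f : {set 'I_n} -> L.

Lemma polyfun_p0 : polyfun (p0 f).
Proof.
exists (foldr (fun I t => LJoin t (monom_term (f I) (enum I))) (LConst (f set0))
          (enum [set: {set 'I_n}])) => x.
by rewrite /p0; elim: (enum _) => //= I s ->; rewrite leval_monom_term.
Qed.

Lemma p0_le x w : (p0 f x <= w) = (f set0 <= w) &&
  all (fun I => monom (f I) (enum I) x <= w) (enum [set: {set 'I_n}]).
Proof.
rewrite /p0; elim: (enum _) => [|I s IH] /=; first by rewrite andbT.
by rewrite leUx IH andbAC andbA.
Qed.

Lemma monom_le_p0 x I : monom (f I) (enum I) x <= p0 f x.
Proof.
move: (lexx (p0 f x)); rewrite p0_le => /andP[_ /allP]; apply.
by rewrite mem_enum inE.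
Qed.

Lemma p0_mono x y : (forall i, x i <= y i) -> p0 f x <= p0 f y.
Proof. by have [t pt] := polyfun_p0; rewrite !pt; apply: leval_mono. Qed.

Lemma p0_restricts a b : (forall i, a i <= b i) ->
  fmonotone f -> star_cond a b f -> restricts (p0 f) a b f.
Proof.
move=> le_ab f_mono f_star J; apply: le_anti; apply/andP; split.
  rewrite p0_le f_mono ?sub0set //=; apply/allP => I _.
  apply: (star_meet_lo f_mono f_star (I := I)); first exact: monom_le_coef.
  move=> i /setDP[iI iJ].
  apply: le_trans (monom_le_var _ _ (_ : i \in enum I)) _; first by rewrite mem_enum.
  by rewrite /ehat (negbTE iJ).
apply: (star_le_dominating f_star (G := fun J => p0 f (ehat a b J))).
  by move=> I K sIK; apply/p0_mono/ehat_mono.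
move=> K y yf yb; apply: le_trans (monom_le_p0 _ K).
rewrite le_monom yf; apply/allP => i; rewrite mem_enum => iK.
by rewrite /ehat iK yb.
Qed.
End PolynomialFunctions.

Section BooleanDNF.
Context {d : Order.disp_t} {B : ctbDistrLatticeType d} {n : nat}.
Variable c : {set 'I_n} -> B.

Definition dnf (x : 'I_n -> B) : B :=
  \join_(I : {set 'I_n}) (c I `&` \meet_(i in I) x i).

Lemma le_dnf I x : c I `&` \meet_(i in I) x i <= dnf x.
Proof. exact: (joins_sup (P := xpredT) (fun I => c I `&` \meet_(i in I) x i)). Qed.

Lemma eq_dnf x y : x =1 y -> dnf x = dnf y.
Proof. by move=> eq_xy; apply: eq_bigr => I _; under eq_bigr do rewrite eq_xy. Qed.

Lemma dnf_mono x y : (forall i, x i <= y i) -> dnf x <= dnf y.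
Proof.
move=> le_xy; apply/joinsP => I _; apply: le_trans (le_dnf I y).
apply: leI2 => //; apply/meetsP => i iI.
exact: le_trans (meets_inf _ iI) (le_xy i).
Qed.

Variables (lo hi : 'I_n -> B) (F : {set 'I_n} -> B).

Lemma dnf_ehat_lower I :
  (forall J, dnf (ehat lo hi J) = F J) -> fmonotone c ->
  F I `&` \meet_(i | i \notin I) ~` lo i <= c I.
Proof.
move=> dnfF c_mono; rewrite -dnfF leI_shunt.
apply/joinsP => K _; rewrite -leI_shunt.
have [sKI | /subsetPn[i iK iI]] := boolP (K \subset I).
  by apply/leIxl/leIxl/c_mono.
apply: le_trans (_ : lo i `&` ~` lo i <= _); last by rewrite meetxC le0x.
apply: leI2; last exact: meets_inf.
by apply/leIxr; apply: le_trans (meets_inf _ iK) _; rewrite /ehat (negbTE iI).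
Qed.

Lemma dnf_ehat_upper I :
  (forall J, dnf (ehat lo hi J) = F J) -> c I <= F I `|` \join_(i in I) ~` hi i.
Proof.
move=> dnfF; rewrite -[X in _ `|` X]complK -leI_shunt -dnfF.
apply: le_trans (le_dnf I _); apply: leI2 => //; apply/meetsP => i iI.
by rewrite /ehat iI leCx; apply: joins_sup.
Qed.

Hypothesis le_lohi : forall i, lo i <= hi i.
Hypothesis F_mono : fmonotone F.
Hypothesis F_star : star_cond lo hi F.

Lemma ehat_le_hi J i : ehat lo hi J i <= hi i.
Proof. by rewrite /ehat; case: ifP. Qed.

Lemma dnf_ehat_le J :
  (forall I, c I <= F I `|` \join_(i in I) ~` hi i) -> dnf (ehat lo hi J) <= F J.
Proof.
move=> c_upper; apply/joinsP => I _.
apply: (le_by_split (leIxl _ (c_upper I))) => w wcI.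
  move=> wF; apply: (star_meet_lo F_mono F_star wF) => i /setDP[iI iJ].
  apply: le_trans wcI (leIxr _ (le_trans (meets_inf _ iI) _)).
  by rewrite /ehat (negbTE iJ).
move=> whi; set h := \join_(i in I) ~` hi i in whi.
apply: le_trans (_ : h `&` ~` h <= _); last by rewrite meetxC le0x.
rewrite lexI whi /h compl_joins; apply/meetsP => i iI; rewrite complK.
exact: le_trans wcI (leIxr _ (le_trans (meets_inf _ iI) (ehat_le_hi J i))).
Qed.

Lemma le_dnf_ehat J :
  (forall I, F I `&` \meet_(i | i \notin I) ~` lo i <= c I) -> F J <= dnf (ehat lo hi J).
Proof.
move=> c_lower; apply: (star_le_dominating F_star (G := fun J => dnf (ehat lo hi J))).
  by move=> I K sIK; apply/dnf_mono/ehat_mono.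
move=> K y yF yhi.
apply: (le_by_compl_cases (S := ~: K) (x := lo)) => U w sU wy wlo wnlo.
apply: le_trans (le_dnf (K :|: U) _); rewrite lexI; apply/andP; split.
  apply: le_trans (c_lower (K :|: U)); rewrite lexI; apply/andP; split.
    exact: le_trans wy (le_trans yF (F_mono (subsetUl _ _))).
  apply/meetsP => i; rewrite !inE negb_or => /andP[iK iU].
  by apply: wnlo; rewrite !inE iK iU.
apply/meetsP => i; rewrite /ehat inE; case: ifP => [iK _ | _ /= iU].
  exact: le_trans wy (yhi i iK).
exact: wlo.
Qed.
End BooleanDNF.

Section BooleanEmbedding.
Context {d : Order.disp_t} {L : distrLatticeType d}.
Context {dB : Order.disp_t} {B : ctbDistrLatticeType dB} {n : nat}.
Variable phi : L -> B.
Hypothesis phi_emb : bool_embedding phi.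

Lemma embedding_le x y : x <= y -> phi x <= phi y.
Proof.
by case: phi_emb => _ phiI _ _ _ /meet_idPl xy; apply/meet_idPl; rewrite -phiI xy.
Qed.

Lemma embedding_star (a b : 'I_n -> L) f : fmonotone f -> star_cond a b f ->
  fmonotone (phi \o f) /\ star_cond (phi \o a) (phi \o b) (phi \o f).
Proof.
case: phi_emb => _ phiI phiU _ _ f_mono f_star.
split=> [I J /f_mono/embedding_le // | I k].
case/andP: (f_star I k) => /embedding_le le1 /embedding_le le2.
by rewrite /= -phiI -phiU le1 le2.
Qed.

Lemma comp_ehat (a b : 'I_n -> L) J : phi \o ehat a b J =1 ehat (phi \o a) (phi \o b) J.
Proof. by move=> i; rewrite /ehat /=; case: ifP. Qed.
End BooleanEmbedding.

Theorem theorem3p6 (d : Order.disp_t) (L : distrLatticeType d) (n : nat)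
  (a b : 'I_n -> L) (f : {set 'I_n} -> L) :
  (0 < n)%N -> (forall i, strict_lt (a i) (b i)) ->
  [/\ (exists p : ('I_n -> L) -> L, polyfun p /\ restricts p a b f)
        <-> (fmonotone f /\ star_cond a b f),
      fmonotone f /\ star_cond a b f ->
        forall (dB : Order.disp_t) (B : ctbDistrLatticeType dB) (phi : L -> B),
          bool_embedding phi ->
          forall (p : ('I_n -> L) -> L) (c : {set 'I_n} -> B),
            polyfun p -> dnf_coeffs phi p c ->
            (restricts p a b f <-> coeff_bounds phi a b f c)
    & fmonotone f /\ star_cond a b f -> polyfun (p0 f) /\ restricts (p0 f) a b f].
Proof.
move=> _ lt_ab; have le_ab i : a i <= b i := ltW (lt_ab i).
have p0_ok (fs : fmonotone f /\ star_cond a b f) :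
    polyfun (p0 f) /\ restricts (p0 f) a b f.
  by case: fs => f_mono f_star; split; [exact: polyfun_p0 | exact: p0_restricts].
split=> //.
  split=> [[p [/polyfun_restricts_star]] | /p0_ok]; [exact | by exists (p0 f)].
move=> [f_mono f_star] dB B phi phi_emb p c _ [_ c_mono _ _ p_dnf].
have [phi_mono phi_star] := embedding_star phi_emb f_mono f_star.
have phi_p J : phi (p (ehat a b J)) = dnf c (ehat (phi \o a) (phi \o b) J).
  by rewrite p_dnf; apply: eq_dnf; apply: comp_ehat.
have phi_le_ab i : (phi \o a) i <= (phi \o b) i := embedding_le phi_emb (le_ab i).
split=> [pf I | bounds J].
  have dnf_f J : dnf c (ehat (phi \o a) (phi \o b) J) = (phi \o f) J.
    by rewrite -phi_p pf.
  by rewrite (dnf_ehat_lower _ dnf_f) ?(dnf_ehat_upper _ dnf_f).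
have c_lower I := proj1 (andP (bounds I)); have c_upper I := proj2 (andP (bounds I)).
case: phi_emb => phi_inj _ _ _ _; apply: phi_inj; rewrite phi_p; apply: le_anti.
by rewrite (dnf_ehat_le phi_le_ab phi_mono phi_star _ c_upper)
  (le_dnf_ehat phi_le_ab phi_mono phi_star _ c_lower).
Qed.
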